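(* Let $(\mathcal{C},f,m)$ be a Floer triple over a field $\mathbb{F}$. Then the kernel of the canonical map $\kappa\colon\overline{HM}\to\underline{HM}$ is isomorphic to $\varprojlim^1_{a\to-\infty}\big(\varinjlim_{b\to\infty}HM_a^b\big)$.
   Context: A Floer triple $(\mathcal{C},f,m)$ over $\mathbb{F}$: a set $\mathcal{C}$, $f\colon\mathcal{C}\to\mathbb{R}$, $m\colon\mathcal{C}\times\mathcal{C}\to\mathbb{F}$ with (i) $\mathcal{C}_a^b=\{c: a\le f(c)\le b\}$ finite for all $a\le b$; (ii) $m(c_1,c_2)\ne0\Rightarrow f(c_1)<f(c_2)$; (iii) $\sum_{c_2}m(c_1,c_2)m(c_2,c_3)=0$ for all $c_1,c_3$. $CM_a^b$ is the $\mathbb{F}$-vector space with basis $\mathcal{C}_a^b$ (zero if $a>b$), $\partial_a^b c=\sum_{c'\in\mathcal{C}_a^b}m(c',c)c'$, $HM_a^b$ its homology. For $a_1\le a_2$, $p^b_{a_2,a_1}\colon CM^b_{a_1}\to CM^b_{a_2}$ sends $c\mapsto c$ if $f(c)\ge a_2$, else $0$; for $b_1\le b_2$, $i_a^{b_2,b_1}$ is the inclusion. $\overline{HM}=\varinjlim_b\varprojlim_a HM_a^b$ and $\underline{HM}=\varprojlim_a\varinjlim_b HM_a^b$, where inverse limits over $a$ are taken with respect to the maps induced by $p$ (compatible families) and direct limits over $b$ with respect to the maps induced by $i$; $\kappa$ sends the class of $(x_a)_a\in\varprojlim_aHM_a^b$ to $(\iota_a^bx_a)_a$ with $\iota_a^b\colon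 HM_a^b\to\varinjlim_{b'}HM_a^{b'}$ canonical. For a system $(G_a)_{a\in\mathbb{R}}$ with maps $\pi_{a_2,a_1}\colon G_{a_1}\to G_{a_2}$ ($a_1\le a_2$), choose $a_1\ge a_2\ge\dots$ with $a_j\to-\infty$ and define $\varprojlim^1G=\mathrm{coker}\,\Delta$, where $\Delta\colon\prod_jG_{a_j}\to\prod_jG_{a_j}$, $(x_j)_j\mapsto(x_j-\pi_{a_j,a_{j+1}}x_{j+1})_j$; this is independent of the chosen sequence up to canonical isomorphism. Here $G_a=\varinjlim_b HM_a^b$ with the maps induced by $Hp$. *)

From HB Require Import structures.
From mathcomp Require Import all_boot all_algebra.
From Stdlib Require Import Reals ClassicalEpsilon.

Set Implicit Arguments.
Unset Strict Implicit.
Unset Printing Implicit Defensive.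

Import GRing.Theory.
Local Open Scope ring_scope.

(* finsum P g = sum of g over the set {c | P c} when that set is finite *)
(* (enumerated by a duplicate-free list chosen by epsilon); its value   *)
(* is only used when the set is finite.                                 *)
Definition finsum (F : fieldType) (C : Type) (P : C -> Prop) (g : C -> F) : F :=
  \sum_(c <- epsilon (inhabits (@nil C))
          (fun s : seq C => List.NoDup s /\ forall c, P c <-> List.In c s)) g c.

Definition fsum (F : fieldType) (C : Type) (g : C -> F) : F :=
  finsum (fun c => g c <> 0) g.

Definition inI (C : Type) (f : C -> R) (a b : R) (c : C) : Prop :=
  Rle a (f c) /\ Rle (f c) b.

Definition inIb (C : Type) (f : C -> R) (a b : R) (c : C) : bool :=
  match Rle_dec a (f c), Rle_dec (f c) b with
  | left _, left _ => true
  | _, _ => false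
  end.

Definition floer_triple (F : fieldType) (C : Type) (f : C -> R) (m : C -> C -> F) : Prop :=
  (forall a b, Rle a b -> exists s : seq C, forall c, inI f a b c <-> List.In c s) /\
  (forall c1 c2, m c1 c2 <> 0 -> Rlt (f c1) (f c2)) /\
  (forall c1 c3, fsum (fun c2 => m c1 c2 * m c2 c3) = 0).

(* Chains: an element of CM_a^b is represented by its coefficient       *)
(* function x : C -> F, supported in C_a^b.                             *)
Definition cadd (F : fieldType) (C : Type) (x y : C -> F) : C -> F := fun c => x c + y c.
Definition cscale (F : fieldType) (C : Type) (k : F) (x : C -> F) : C -> F := fun c => k * x c.
Definition csub (F : fieldType) (C : Type) (x y : C -> F) : C -> F := cadd x (cscale (-1) y).

Definition isCM (F : fieldType) (C : Type) (f : C -> R) (a b : R) (x : C -> F) : Prop :=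
  forall c, x c <> 0 -> inI f a b c.

(* boundary  d_a^b c = sum_{c' in C_a^b} m(c',c) c', extended linearly *)
Definition bd (F : fieldType) (C : Type) (f : C -> R) (m : C -> C -> F) (a b : R)
    (x : C -> F) : C -> F :=
  fun c' => if inIb f a b c' then fsum (fun c => m c' c * x c) else 0.

Definition isZ (F : fieldType) (C : Type) (f : C -> R) (m : C -> C -> F) (a b : R)
    (x : C -> F) : Prop :=
  isCM f a b x /\ bd f m a b x = (fun _ => 0).

Definition isB (F : fieldType) (C : Type) (f : C -> R) (m : C -> C -> F) (a b : R)
    (x : C -> F) : Prop :=
  exists y, isCM f a b y /\ x = bd f m a b y.

Definition trunc (F : fieldType) (C : Type) (f : C -> R) (a2 : R) (x : C -> F) : C -> F :=
  fun c => if Rle_dec a2 (f c) then x c else 0.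

(* Subquotients: a vector space presented as Z / B, with Z, B predicates *)
(* on a carrier with addition and scaling; x ~ y iff B (x - y).         *)
Record SQ (F : fieldType) := MkSQ {
  sq_T : Type;
  sq_add : sq_T -> sq_T -> sq_T;
  sq_scale : F -> sq_T -> sq_T;
  sq_Z : sq_T -> Prop;   (* representatives *)
  sq_B : sq_T -> Prop    (* representatives of the zero class *)
}.

Definition sq_sub (F : fieldType) (S : SQ F) (x y : sq_T S) : sq_T S :=
  sq_add x (sq_scale (-1) y).

(* a linear map between the quotients, given on representatives *)
Definition sq_linear (F : fieldType) (S1 S2 : SQ F) (phi : sq_T S1 -> sq_T S2) : Prop :=
  (forall x, sq_Z x -> sq_Z (phi x)) /\
  (forall x, sq_Z x -> sq_B x -> sq_B (phi x)) /\
  (forall k x y, sq_Z x -> sq_Z y ->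
     sq_B (sq_sub (phi (sq_add (sq_scale k x) y)) (sq_add (sq_scale k (phi x)) (phi y)))).

Definition sq_iso (F : fieldType) (S1 S2 : SQ F) : Prop :=
  exists phi : sq_T S1 -> sq_T S2,
    sq_linear phi /\
    (forall x, sq_Z x -> sq_B (phi x) -> sq_B x) /\
    (forall y, sq_Z y -> exists x, sq_Z x /\ sq_B (sq_sub (phi x) y)).

Definition sq_ker (F : fieldType) (S1 S2 : SQ F) (phi : sq_T S1 -> sq_T S2) : SQ F :=
  @MkSQ F (sq_T S1) (@sq_add F S1) (@sq_scale F S1)
     (fun x => sq_Z x /\ sq_B (phi x)) (@sq_B F S1).
Arguments sq_ker [F] S1 S2 phi.

Section Spaces.
Variables (F : fieldType) (C : Type) (f : C -> R) (m : C -> C -> F).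

Definition HM (a b : R) : SQ F :=
  @MkSQ F (C -> F) (@cadd F C) (@cscale F C) (isZ f m a b) (isB f m a b).

(* G_a = colim_b HM_a^b : elements are pairs (b, x) with x a cycle of CM_a^b;
   (b1,x1) ~ (b2,x2) iff their images agree in some HM_a^b', b' >= b1, b2. *)
Definition Gadd (p q : R * (C -> F)) : R * (C -> F) := (Rmax p.1 q.1, cadd p.2 q.2).
Definition Gscale (k : F) (p : R * (C -> F)) : R * (C -> F) := (p.1, cscale k p.2).
Definition GZ (a : R) (p : R * (C -> F)) : Prop := isZ f m a p.1 p.2.
Definition GB (a : R) (p : R * (C -> F)) : Prop :=
  exists b', Rle p.1 b' /\ isB f m a b' p.2.
Definition G (a : R) : SQ F := @MkSQ F (R * (C -> F)) Gadd Gscale (GZ a) (GB a).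
Definition Gp (a2 : R) (p : R * (C -> F)) : R * (C -> F) := (p.1, trunc f a2 p.2).
Definition Gsub (p q : R * (C -> F)) := Gadd p (Gscale (-1) q).

(* overline HM = colim_b lim_a HM_a^b : pairs (b, (x_a)_a) with (x_a)_a a
   compatible family of classes in HM_a^b (given by representatives) *)
Definition Oadd (p q : R * (R -> C -> F)) : R * (R -> C -> F) :=
  (Rmax p.1 q.1, fun a => cadd (p.2 a) (q.2 a)).
Definition Oscale (k : F) (p : R * (R -> C -> F)) : R * (R -> C -> F) :=
  (p.1, fun a => cscale k (p.2 a)).
Definition OZ (p : R * (R -> C -> F)) : Prop :=
  (forall a, isZ f m a p.1 (p.2 a)) /\
  (forall a1 a2, Rle a1 a2 -> isB f m a2 p.1 (csub (trunc f a2 (p.2 a1)) (p.2 a2))).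
Definition OB (p : R * (R -> C -> F)) : Prop :=
  exists b', Rle p.1 b' /\ forall a, isB f m a b' (p.2 a).
Definition HMbar : SQ F := @MkSQ F (R * (R -> C -> F)) Oadd Oscale OZ OB.

(* underline HM = lim_a colim_b HM_a^b : compatible families (y_a)_a, y_a in G_a *)
Definition Uadd (y z : R -> R * (C -> F)) : R -> R * (C -> F) := fun a => Gadd (y a) (z a).
Definition Uscale (k : F) (y : R -> R * (C -> F)) : R -> R * (C -> F) :=
  fun a => Gscale k (y a).
Definition UZ (y : R -> R * (C -> F)) : Prop :=
  (forall a, GZ a (y a)) /\
  (forall a1 a2, Rle a1 a2 -> GB a2 (Gsub (Gp a2 (y a1)) (y a2))).
Definition UB (y : R -> R * (C -> F)) : Prop := forall a, GB a (y a).
Definition HMund : SQ F := @MkSQ F (R -> R * (C -> F)) Uadd Uscale UZ UB.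

(* kappa : class of (x_a)_a in lim_a HM_a^b  |->  (iota_a^b x_a)_a *)
Definition kappa (p : R * (R -> C -> F)) : R -> R * (C -> F) := fun a => (p.1, p.2 a).

(* lim^1 of (G_a) along a_1 >= a_2 >= ... : coker of
   Delta (x_j)_j = (x_j - pi_{a_j, a_{j+1}} x_{j+1})_j on prod_j G_{a_j} *)
Definition Ladd (y z : nat -> R * (C -> F)) : nat -> R * (C -> F) := fun j => Gadd (y j) (z j).
Definition Lscale (k : F) (y : nat -> R * (C -> F)) : nat -> R * (C -> F) :=
  fun j => Gscale k (y j).
Definition LZ (aj : nat -> R) (y : nat -> R * (C -> F)) : Prop := forall j, GZ (aj j) (y j).
Definition LB (aj : nat -> R) (y : nat -> R * (C -> F)) : Prop :=
  exists x : nat -> R * (C -> F),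
    (forall j, GZ (aj j) (x j)) /\
    (forall j, GB (aj j) (Gsub (y j) (Gsub (x j) (Gp (aj j) (x j.+1))))).
Definition lim1G (aj : nat -> R) : SQ F :=
  @MkSQ F (nat -> R * (C -> F)) Ladd Lscale (LZ aj) (LB aj).

End Spaces.

(* Along a sequence [a_j] decreasing to -oo, an element of ker kappa is a compatible
   family of classes [x_a] in HM_a^b that become boundaries [x_a = d y_a] once b may
   grow. The compatibility of [x_{a_j+1}] and [x_{a_j}] is witnessed by chains [w_j]
   of bounded height, and the cycles [y_j - p y_j+1 + w_j] define the connecting map
   delta : ker kappa -> lim^1 G. Other choices change delta by an element of the image
   of Delta: the primitives differ by cycles, and the witnesses by cycles of bounded
   height, whose lim^1 vanishes since the images of HM_{a_n}^b in the finite-dimensional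
   HM_{a_j}^b stabilise (Mittag-Leffler). If delta x = 0 the primitives can be corrected
   to have a common height, so x = 0; and cycles [z_j] are delta of the boundaries of
   the telescoping sums [-(z_0 + ... + z_n-1)]. *)

From HB Require Import structures.
From Stdlib Require Import Reals Lra Classical ClassicalEpsilon FunctionalExtensionality.
From mathcomp Require Import all_boot all_algebra ring.
From Stdlib Require List Permutation.

Set Implicit Arguments.
Unset Strict Implicit.
Unset Printing Implicit Defensive.
Import GRing.Theory.
Local Open Scope ring_scope.

Ltac case_Rle_dec :=
  match goal with |- context [Rle_dec ?a ?b] => case: (Rle_dec a b) => ? /= end.

Section FloerComplex.
Variables (F : fieldType) (C : Type) (f : C -> R) (m : C -> C -> F).
Hypothesis floer : floer_triple f m.
Implicit Types (x y z : C -> F) (k : F) (a b : R).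

Definition czero : C -> F := fun _ => 0.

Ltac chain_eq := let c := fresh "c" in apply: functional_extensionality => c;
  rewrite /csub /cadd /cscale /trunc /czero /=; repeat case_Rle_dec; ring.

Lemma big_Permutation (s1 s2 : seq C) (g : C -> F) :
  Permutation.Permutation s1 s2 -> \sum_(c <- s1) g c = \sum_(c <- s2) g c.
Proof.
elim=> [|c s s' _ IH|c c' s|s s' s'' _ IH1 _ IH2]; rewrite ?big_cons ?IH //.
  exact: addrCA.
by rewrite IH1 IH2.
Qed.

Lemma filter_List (p : pred C) (s : seq C) : filter p s = List.filter p s.
Proof. by elim: s => //= c s ->. Qed.

Lemma fsum_seq (g : C -> F) (s : seq C) : List.NoDup s ->
  (forall c, g c <> 0 -> List.In c s) -> fsum g = \sum_(c <- s) g c.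
Proof.
move=> uniq_s supp_s; rewrite /fsum /finsum.
set s1 := filter (fun c => g c != 0) s.
have s1P : forall c, g c <> 0 <-> List.In c s1.
  move=> c; rewrite /s1 filter_List List.filter_In.
  by split=> [/[dup] /supp_s|[_ /eqP]] //; split=> //; apply/eqP.
have uniq_s1 : List.NoDup s1 by rewrite /s1 filter_List; exact: List.NoDup_filter.
match goal with |- context [epsilon ?i ?P] =>
  have [uniq_e eP] := epsilon_spec i P (ex_intro _ _ (conj uniq_s1 s1P)) end.
rewrite (big_Permutation _ (Permutation.NoDup_Permutation uniq_e uniq_s1 _)); last first.
  by move=> c; rewrite -eP s1P.
rewrite /s1 big_filter big_mkcond; apply: eq_bigr => c _.
by case: eqP => // ->.
Qed.

Lemma fsum0 : fsum (fun _ : C => 0 : F) = 0.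
Proof. by rewrite (@fsum_seq _ nil) ?big_nil //; constructor. Qed.

Lemma window_seq a b : exists s : seq C, List.NoDup s /\
  forall c, Rle a (f c) -> Rle (f c) b -> List.In c s.
Proof.
case: (Rle_dec a b) => [le_ab|nle_ab].
- have [s sP] := floer.1 a b le_ab.
  pose dec := fun c c' : C => excluded_middle_informative (c = c').
  exists (List.nodup dec s); split; first exact: List.NoDup_nodup.
  by move=> c ? ?; apply/List.nodup_In; apply/sP.
- exists nil; split; first constructor.
  by move=> c ? ?; exfalso; apply: nle_ab; apply: Rle_trans; eauto.
Qed.

Lemma m_lt c' c : m c' c <> 0 -> Rlt (f c') (f c).
Proof. exact: floer.2.1. Qed.

Definition supported (P : C -> Prop) x := forall c, x c <> 0 -> P c.
Definition supp_le b x := supported (fun c => Rle (f c) b) x.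
Definition supp_ge a x := supported (fun c => Rle a (f c)) x.
Definition bounded x := exists b, supp_le b x.

Lemma supported0 P : supported P czero.
Proof. by move=> c []. Qed.

Lemma supported_lin P k x y : supported P x -> supported P y ->
  supported P (cadd (cscale k x) y).
Proof.
move=> Px Py c; rewrite /cadd /cscale.
case: (x c =P 0) => [->|/Px //]; case: (y c =P 0) => [->|/Py //].
by rewrite mulr0 addr0.
Qed.

Lemma supported_add P x y : supported P x -> supported P y -> supported P (cadd x y).
Proof.
move=> Px Py; have := supported_lin (k:=1) Px Py.
by have -> : cadd (cscale 1 x) y = cadd x y by chain_eq.
Qed.

Lemma supported_scale P k x : supported P x -> supported P (cscale k x).
Proof.
move=> Px; have := supported_lin (k:=k) Px (supported0 P).
by have -> : cadd (cscale k x) czero = cscale k x by chain_eq.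
Qed.

Lemma supported_sub P x y : supported P x -> supported P y -> supported P (csub x y).
Proof. by move=> Px Py; apply: supported_add => //; exact: supported_scale. Qed.

Lemma supported_trunc P a x : supported P x -> supported P (trunc f a x).
Proof. by move=> Px c; rewrite /trunc; case_Rle_dec => //; exact: Px. Qed.

Lemma supp_ge_trunc a x : supp_ge a (trunc f a x).
Proof. by move=> c; rewrite /trunc; case_Rle_dec. Qed.

Lemma supp_le_mono b b' x : Rle b b' -> supp_le b x -> supp_le b' x.
Proof. by move=> le_bb' bx c /bx; lra. Qed.

Lemma supp_ge_mono a a' x : Rle a' a -> supp_ge a x -> supp_ge a' x.
Proof. by move=> le_aa' ax c /ax; lra. Qed.

Lemma isCM_supp a b x : isCM f a b x <-> supp_ge a x /\ supp_le b x.
Proof. by split=> [H|[ax bx] c cx]; [split=> c /H []|split; [exact: ax|exact: bx]]. Qed.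

Lemma isCM_le a b x : isCM f a b x -> supp_le b x.
Proof. by case/isCM_supp. Qed.

Lemma isCM_bounded a b x : isCM f a b x -> bounded x.
Proof. by move=> H; exists b; exact: isCM_le H. Qed.

Lemma isCM_mono a b a' b' x : Rle a' a -> Rle b b' -> isCM f a b x -> isCM f a' b' x.
Proof.
move=> le_a le_b /isCM_supp [ax bx]; apply/isCM_supp.
by split; [exact: supp_ge_mono ax|exact: supp_le_mono bx].
Qed.

Lemma isCM_trunc a b x : supp_le b x -> isCM f a b (trunc f a x).
Proof. by move=> bx; apply/isCM_supp; split; [exact: supp_ge_trunc|exact: supported_trunc]. Qed.

Lemma bounded_lin k x y : bounded x -> bounded y -> bounded (cadd (cscale k x) y).
Proof.
move=> [b1 bx] [b2 by_]; exists (Rmax b1 b2); apply: supported_lin.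
- exact: supp_le_mono (Rmax_l _ _) bx.
- exact: supp_le_mono (Rmax_r _ _) by_.
Qed.

Lemma bounded_sub x y : bounded x -> bounded y -> bounded (csub x y).
Proof.
move=> bx by_; have := bounded_lin (-1) by_ bx.
by have -> : cadd (cscale (-1) y) x = csub x y by chain_eq.
Qed.

Lemma bounded_add x y : bounded x -> bounded y -> bounded (cadd x y).
Proof.
move=> bx by_; have := bounded_lin 1 bx by_.
by have -> : cadd (cscale 1 x) y = cadd x y by chain_eq.
Qed.

Lemma bounded_trunc a x : bounded x -> bounded (trunc f a x).
Proof. by move=> [b bx]; exists b; exact: supported_trunc. Qed.

Lemma trunc_trunc a1 a2 x : Rle a1 a2 -> trunc f a2 (trunc f a1 x) = trunc f a2 x.
Proof.
move=> le_a; apply: functional_extensionality => c; rewrite /trunc.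
by do 2 case_Rle_dec => //; exfalso; lra.
Qed.

Lemma trunc_id a x : supp_ge a x -> trunc f a x = x.
Proof.
move=> ax; apply: functional_extensionality => c; rewrite /trunc.
by case_Rle_dec => //; case: (x c =P 0) => // /ax.
Qed.

Lemma supp_le_sub_trunc a x : supp_le a (csub x (trunc f a x)).
Proof.
move=> c; rewrite /csub /cadd /cscale /trunc; case_Rle_dec => [|?]; last lra.
by rewrite mulN1r subrr.
Qed.

Definition dfull x : C -> F := fun c' => fsum (fun c => m c' c * x c).

Lemma dfull_local x y c' :
  (forall c, Rlt (f c') (f c) -> x c = y c) -> dfull x c' = dfull y c'.
Proof.
move=> xy; congr fsum; apply: functional_extensionality => c.
by case: (m c' c =P 0) => [->|/m_lt /xy ->]; rewrite ?mul0r.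
Qed.

Lemma dfull_eq0 x c' : (forall c, Rlt (f c') (f c) -> x c = 0) -> dfull x c' = 0.
Proof.
move=> x0; rewrite (@dfull_local x czero) //; rewrite -[RHS]fsum0.
by congr fsum; apply: functional_extensionality => c; rewrite /czero mulr0.
Qed.

Lemma dfull0 : dfull czero = czero.
Proof. by apply: functional_extensionality => c; exact: dfull_eq0. Qed.

Lemma dfull_supp_le b x c' : supp_le b x -> Rle b (f c') -> dfull x c' = 0.
Proof.
move=> bx le_b; apply: dfull_eq0 => c lt_c.
by case: (x c =P 0) => // /bx; lra.
Qed.

Lemma supp_le_dfull b x : supp_le b x -> supp_le b (dfull x).
Proof.
move=> bx c dx; case: (Rle_dec (f c) b) => // nle; exfalso; apply: dx.
by apply: (dfull_supp_le bx); lra.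
Qed.

Lemma bounded_dfull x : bounded x -> bounded (dfull x).
Proof. by move=> [b bx]; exists b; exact: supp_le_dfull. Qed.

Lemma dfull_trunc a x c : Rle a (f c) -> dfull (trunc f a x) c = dfull x c.
Proof.
move=> le_a; apply: dfull_local => c' lt_c'; rewrite /trunc.
by case_Rle_dec => //; exfalso; lra.
Qed.

Lemma dfull_seq b x s c' : supp_le b x -> List.NoDup s ->
  (forall c, Rle (f c') (f c) -> Rle (f c) b -> List.In c s) ->
  dfull x c' = \sum_(c <- s) m c' c * x c.
Proof.
move=> bx uniq_s window_s; apply: fsum_seq => // c mx; apply: window_s.
- by apply: Rlt_le; apply: m_lt => m0; apply: mx; rewrite m0 mul0r.
- by apply: bx => x0; apply: mx; rewrite x0 mulr0.
Qed.

Lemma dfull_lin k x y : bounded x -> bounded y ->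
  dfull (cadd (cscale k x) y) = cadd (cscale k (dfull x)) (dfull y).
Proof.
move=> [b1 bx] [b2 by_]; apply: functional_extensionality => c'.
have bx' := supp_le_mono (Rmax_l b1 b2) bx; have by' := supp_le_mono (Rmax_r b1 b2) by_.
have [s [uniq_s window_s]] := window_seq (f c') (Rmax b1 b2).
rewrite (dfull_seq (supported_lin (k:=k) bx' by') uniq_s window_s) /cadd /cscale.
rewrite (dfull_seq bx' uniq_s window_s) (dfull_seq by' uniq_s window_s).
by rewrite mulr_sumr -big_split; apply: eq_bigr => c _ /=; rewrite /cadd /cscale; ring.
Qed.

Lemma dfullD x y : bounded x -> bounded y -> dfull (cadd x y) = cadd (dfull x) (dfull y).
Proof.
move=> bx by_; have := dfull_lin 1 bx by_.
have -> : cadd (cscale 1 x) y = cadd x y by chain_eq.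
by move=> ->; chain_eq.
Qed.

Lemma dfullB x y : bounded x -> bounded y -> dfull (csub x y) = csub (dfull x) (dfull y).
Proof.
move=> bx by_; have := dfull_lin (-1) by_ bx.
have -> : cadd (cscale (-1) y) x = csub x y by chain_eq.
by move=> ->; chain_eq.
Qed.

Lemma dfullK x : bounded x -> dfull (dfull x) = czero.
Proof.
move=> [b bx]; apply: functional_extensionality => c1.
have [s [uniq_s window_s]] := window_seq (f c1) b.
rewrite (dfull_seq (supp_le_dfull bx) uniq_s window_s).
have dx_seq c2 : m c1 c2 * dfull x c2 = \sum_(c <- s) m c1 c2 * (m c2 c * x c).
  rewrite -mulr_sumr; case: (m c1 c2 =P 0) => [->|/m_lt lt_c2]; first by rewrite !mul0r.
  by congr (_ * _); apply: (dfull_seq bx uniq_s) => c ? ?; apply: window_s => //; lra.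
rewrite (eq_bigr _ (fun c2 _ => dx_seq c2)) exchange_big /= big1 // => c _.
rewrite (eq_bigr (fun c2 => m c1 c2 * m c2 c * x c)) => [|c2 _]; last by rewrite mulrA.
rewrite -mulr_suml; case: (x c =P 0) => [->|/bx le_cb]; first by rewrite mulr0.
(* the inner sum is the coefficient of [c1] in [d (d c)], zero for a Floer triple *)
rewrite -(@fsum_seq (fun c2 => m c1 c2 * m c2 c)) // ?floer.2.2 ?mul0r // => c2 mm.
have /m_lt lt1 : m c1 c2 <> 0 by move=> m0; apply: mm; rewrite m0 mul0r.
have /m_lt lt2 : m c2 c <> 0 by move=> m0; apply: mm; rewrite m0 mulr0.
by apply: window_s; lra.
Qed.

(* The differential of CM_a^b; no upper truncation is needed since [d] lowers [f]. *)
Definition dtrunc a x := trunc f a (dfull x).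

Lemma bd_dtrunc a b x : supp_le b x -> bd f m a b x = dtrunc a x.
Proof.
move=> bx; apply: functional_extensionality => c; rewrite /bd /inIb /dtrunc /trunc.
by do 2 case_Rle_dec => //; symmetry; apply: (dfull_supp_le bx); lra.
Qed.

Lemma dtrunc0 a : dtrunc a czero = czero.
Proof. by rewrite /dtrunc dfull0; chain_eq. Qed.

Lemma dtrunc_lin a k x y : bounded x -> bounded y ->
  dtrunc a (cadd (cscale k x) y) = cadd (cscale k (dtrunc a x)) (dtrunc a y).
Proof. by move=> bx by_; rewrite /dtrunc dfull_lin //; chain_eq. Qed.

Lemma dtruncD a x y : bounded x -> bounded y ->
  dtrunc a (cadd x y) = cadd (dtrunc a x) (dtrunc a y).
Proof. by move=> bx by_; rewrite /dtrunc dfullD //; chain_eq. Qed.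

Lemma dtruncB a x y : bounded x -> bounded y ->
  dtrunc a (csub x y) = csub (dtrunc a x) (dtrunc a y).
Proof. by move=> bx by_; rewrite /dtrunc dfullB //; chain_eq. Qed.

Lemma dtrunc_trunc a x : dtrunc a (trunc f a x) = dtrunc a x.
Proof.
apply: functional_extensionality => c; rewrite /dtrunc /trunc.
by case_Rle_dec => //; exact: dfull_trunc.
Qed.

Lemma trunc_dtrunc a1 a2 x : Rle a1 a2 -> trunc f a2 (dtrunc a1 x) = dtrunc a2 x.
Proof. exact: trunc_trunc. Qed.

Lemma dtruncK a x : bounded x -> dtrunc a (dtrunc a x) = czero.
Proof. by move=> bx; rewrite dtrunc_trunc /dtrunc dfullK //; chain_eq. Qed.

Definition is_cycle a b x := isCM f a b x /\ dtrunc a x = czero.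
Definition is_bdry a b x := exists y, isCM f a b y /\ x = dtrunc a y.
Definition is_bdry_lim a x := exists b, is_bdry a b x.

Lemma isZ_cycle a b x : isZ f m a b x <-> is_cycle a b x.
Proof. by split=> -[xCM dx]; split=> //; move: dx; rewrite (bd_dtrunc _ (isCM_le xCM)). Qed.

Lemma isB_bdry a b x : isB f m a b x <-> is_bdry a b x.
Proof.
by split=> -[y [yCM ->]]; exists y; split; rewrite // (bd_dtrunc _ (isCM_le yCM)).
Qed.

Lemma is_bdry_mono a b b' x : Rle b b' -> is_bdry a b x -> is_bdry a b' x.
Proof. by move=> le_b [y [yCM ->]]; exists y; split=> //; exact: isCM_mono (Rle_refl a) le_b yCM. Qed.

Lemma is_cycle_mono a b b' x : Rle b b' -> is_cycle a b x -> is_cycle a b' x.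
Proof. by move=> le_b [xCM dx]; split=> //; exact: isCM_mono (Rle_refl a) le_b xCM. Qed.

Lemma GB_bdry_lim a p : GB f m a p <-> is_bdry_lim a p.2.
Proof.
split=> [[b' [_ /isB_bdry]]|[b xb]]; first by exists b'.
exists (Rmax p.1 b); split; first exact: Rmax_l.
by apply/isB_bdry; exact: is_bdry_mono (Rmax_r _ _) xb.
Qed.

Lemma is_bdry_dtrunc a b y : isCM f a b y -> is_bdry a b (dtrunc a y).
Proof. by move=> yCM; exists y. Qed.

Lemma is_cycle_trunc a a' b x : Rle a' a -> is_cycle a' b x -> is_cycle a b (trunc f a x).
Proof.
move=> le_a [xCM dx]; split; first exact: isCM_trunc (isCM_le xCM).
by rewrite dtrunc_trunc -(trunc_dtrunc _ le_a) dx; chain_eq.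
Qed.

Definition subspace (P : (C -> F) -> Prop) :=
  P czero /\ forall k x y, P x -> P y -> P (cadd (cscale k x) y).

Lemma subspace_add P x y : subspace P -> P x -> P y -> P (cadd x y).
Proof.
move=> [_ Plin] Px Py; have := Plin 1 x y Px Py.
by have -> : cadd (cscale 1 x) y = cadd x y by chain_eq.
Qed.

Lemma subspace_sub P x y : subspace P -> P x -> P y -> P (csub x y).
Proof.
move=> [_ Plin] Px Py; have := Plin (-1) y x Py Px.
by have -> : cadd (cscale (-1) y) x = csub x y by chain_eq.
Qed.

Lemma isCM_subspace a b : subspace (isCM f a b).
Proof. by split=> [|k x y]; [exact: supported0|exact: supported_lin]. Qed.

Lemma is_cycle_subspace a b : subspace (is_cycle a b).
Proof.
split=> [|k x y [xCM dx] [yCM dy]]; first by split; [exact: supported0|exact: dtrunc0].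
split; first exact: (isCM_subspace a b).2.
by rewrite dtrunc_lin ?dx ?dy; [chain_eq|exact: isCM_bounded xCM|exact: isCM_bounded yCM].
Qed.

Lemma is_bdry_subspace a b : subspace (is_bdry a b).
Proof.
split=> [|k x y [x' [x'CM ->]] [y' [y'CM ->]]].
  by exists czero; split; [exact: supported0|rewrite dtrunc0].
exists (cadd (cscale k x') y'); split; first exact: (isCM_subspace a b).2.
by rewrite dtrunc_lin //; [exact: isCM_bounded x'CM|exact: isCM_bounded y'CM].
Qed.

Lemma is_bdry_lim_subspace a : subspace (is_bdry_lim a).
Proof.
split=> [|k x y [b1 xb] [b2 yb]]; first by exists R0; exact: (is_bdry_subspace a R0).1.
exists (Rmax b1 b2); apply: (is_bdry_subspace _ _).2.
- exact: is_bdry_mono (Rmax_l _ _) xb.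
- exact: is_bdry_mono (Rmax_r _ _) yb.
Qed.

Lemma decreasing_le (T : Type) (P : nat -> T -> Prop) :
  (forall n t, P n.+1 t -> P n t) -> forall n n' t, (n <= n')%N -> P n' t -> P n t.
Proof.
move=> Pdec n n' t le_n; rewrite -(subnKC le_n).
by elim: (n' - n)%N => [|d IHd]; rewrite ?addn0 // addnS => /Pdec.
Qed.

(* Descending chains of subspaces of the finite-dimensional space of chains
   supported in [s] are eventually constant; induction on [s], splitting on
   whether every [P n] contains a chain with nonzero coefficient at the head. *)
Lemma subspace_chain_stationary (s : seq C) (P : nat -> (C -> F) -> Prop) :
  (forall n, subspace (P n)) -> (forall n x, P n.+1 x -> P n x) ->
  (forall n x, P n x -> supported (fun c => List.In c s) x) ->
  exists N, forall n, (N <= n)%N -> forall x, P N x -> P n x.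
Proof.
elim: s P => [|c0 s IH] P Psub Pdec Psupp.
  exists 0%N => n _ x Px; have -> : x = czero.
    by apply: functional_extensionality => c; case: (x c =P 0) => // /(Psupp _ _ Px).
  exact: (Psub n).1.
pose Q n x := P n x /\ x c0 = 0.
have [N1 N1Q] : exists N1, forall n, (N1 <= n)%N -> forall x, Q N1 x -> Q n x.
  apply: IH => [n|n x [/Pdec ? ?]|n x [Px x0] c xc] //.
  - split=> [|k x y [Px x0] [Py y0]]; first by split; [exact: (Psub n).1|].
    by split; [exact: (Psub n).2|rewrite /cadd /cscale x0 y0 mulr0 addr0].
  - by case: (Psupp _ _ Px _ xc) => // e; rewrite -e in xc.
case: (classic (forall n, exists y, P n y /\ y c0 <> 0)) => [Pc0|/not_all_ex_not [n2 Pn2]].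
- exists N1 => n le_n x Px; have [y [Py y0]] := Pc0 n.
  have PN1y := decreasing_le Pdec le_n Py.
  pose r := x c0 / y c0.
  have Qx : Q N1 (cadd (cscale (- r) y) x).
    split; first exact: (Psub N1).2.
    by rewrite /cadd /cscale /r mulNr divfK ?addNr //; apply/eqP.
  have -> : x = cadd (cscale r y) (cadd (cscale (- r) y) x) by chain_eq.
  exact: (Psub n).2 Py (N1Q n le_n _ Qx).1.
- exists (maxn N1 n2) => n le_n x Px.
  have x0 : x c0 = 0.
    case: (x c0 =P 0) => // x0; exfalso; apply: Pn2; exists x; split => //.
    exact: (decreasing_le Pdec (leq_maxr N1 n2) Px).
  have QN1 : Q N1 x by split=> //; exact: (decreasing_le Pdec (leq_maxl N1 n2) Px).
  exact: (N1Q n (leq_trans (leq_maxl _ _) le_n) x QN1).1.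
Qed.

Lemma is_bdry_of_primitive p a a' B V : OZ f m p -> Rle a' a -> Rle p.1 B ->
  supp_le B V -> dtrunc a' V = p.2 a' -> is_bdry a B (p.2 a).
Proof.
move=> [_ pC] le_a le_B VB dV.
have [w [wCM dw]] := (isB_bdry _ _ _).1 (pC _ _ le_a).
have VtCM : isCM f a B (trunc f a V) := isCM_trunc VB.
exists (csub (trunc f a V) w); split.
  exact: subspace_sub (isCM_subspace _ _) VtCM (isCM_mono (Rle_refl _) le_B wCM).
rewrite (dtruncB _ (isCM_bounded VtCM) (isCM_bounded wCM)) dtrunc_trunc.
by rewrite -(trunc_dtrunc _ le_a) dV -dw; chain_eq.
Qed.

Ltac bounded_chain := repeat match goal with
  | |- bounded (cadd _ _) => apply: bounded_add
  | |- bounded (csub _ _) => apply: bounded_sub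
  | |- bounded (trunc _ _ _) => apply: bounded_trunc
  | |- bounded (dtrunc _ _) => apply: bounded_trunc
  | |- bounded (dfull _) => apply: bounded_dfull
  | |- bounded _ => eassumption
  end.

Section Sequence.
Variable aj : nat -> R.
Hypothesis aj_dec : forall j, Rle (aj j.+1) (aj j).
Hypothesis aj_unbounded : forall M, exists N, forall j, (N <= j)%N -> Rle (aj j) M.

Lemma aj_anti i j : (i <= j)%N -> Rle (aj j) (aj i).
Proof.
move=> le_ij; rewrite -(subnKC le_ij); elim: (j - i)%N => [|d IHd].
  by rewrite addn0; exact: Rle_refl.
by rewrite addnS; exact: Rle_trans (aj_dec _) IHd.
Qed.

(* [u] represents zero in lim^1, i.e. lies in the image of Delta. *)
Definition lim1_zero (u : nat -> C -> F) := exists (b : nat -> R) (x : nat -> C -> F),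
  (forall j, is_cycle (aj j) (b j) (x j)) /\
  (forall j, is_bdry_lim (aj j) (csub (u j) (csub (x j) (trunc f (aj j) (x j.+1))))).

Lemma LB_lim1_zero (y : nat -> R * (C -> F)) : LB f m aj y <-> lim1_zero (fun j => (y j).2).
Proof.
split=> [[x [xZ xB]]|[b [x [xZ xB]]]].
- exists (fun j => (x j).1), (fun j => (x j).2).
  by split=> j; [apply/isZ_cycle; exact: xZ|exact: (GB_bdry_lim _ _).1 (xB j)].
- exists (fun j => (b j, x j)).
  by split=> j; [apply/isZ_cycle; exact: xZ|apply/GB_bdry_lim; exact: xB].
Qed.

Lemma lim1_zero_lin k u v : lim1_zero u -> lim1_zero v ->
  lim1_zero (fun j => cadd (cscale k (u j)) (v j)).
Proof.
move=> [b1 [x1 [x1Z x1B]]] [b2 [x2 [x2Z x2B]]].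
exists (fun j => Rmax (b1 j) (b2 j)), (fun j => cadd (cscale k (x1 j)) (x2 j)); split=> j.
- apply: (is_cycle_subspace _ _).2.
  + exact: is_cycle_mono (Rmax_l _ _) (x1Z j).
  + exact: is_cycle_mono (Rmax_r _ _) (x2Z j).
- have -> : csub (cadd (cscale k (u j)) (v j))
     (csub (cadd (cscale k (x1 j)) (x2 j)) (trunc f (aj j) (cadd (cscale k (x1 j.+1)) (x2 j.+1))))
   = cadd (cscale k (csub (u j) (csub (x1 j) (trunc f (aj j) (x1 j.+1)))))
          (csub (v j) (csub (x2 j) (trunc f (aj j) (x2 j.+1)))) by chain_eq.
  exact: (is_bdry_lim_subspace _).2.
Qed.

Lemma lim1_zero_add u v : lim1_zero u -> lim1_zero v ->
  lim1_zero (fun j => cadd (u j) (v j)).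
Proof.
move=> uz vz; have := lim1_zero_lin 1 uz vz.
by have -> : (fun j => cadd (cscale 1 (u j)) (v j)) = (fun j => cadd (u j) (v j))
  by apply: functional_extensionality => j; chain_eq.
Qed.

Lemma lim1_zero_Delta (b : nat -> R) (x : nat -> C -> F) :
  (forall j, is_cycle (aj j) (b j) (x j)) ->
  lim1_zero (fun j => csub (x j) (trunc f (aj j) (x j.+1))).
Proof.
move=> xZ; exists b, x; split=> // j.
have -> : csub (csub (x j) (trunc f (aj j) (x j.+1))) (csub (x j) (trunc f (aj j) (x j.+1)))
  = czero by chain_eq.
exact: (is_bdry_lim_subspace _).1.
Qed.

(* Mittag-Leffler: the images of HM_{a_n}^b in the finite-dimensional HM_{a_j}^b
   stabilise as n grows. Writing [u j = x j - p (x j.+1) + e j] with [x j] a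
   truncated partial sum of [u] up to a stable index, the errors [e j] lie in the
   stable images, where they are absorbed recursively. *)
Section MittagLeffler.
Variable b : R.
Variable u : nat -> C -> F.
Hypothesis u_cycle : forall j, is_cycle (aj j) b (u j).

Definition in_image j n x := is_cycle (aj j) b x /\
  exists z, is_cycle (aj n) b z /\ is_bdry (aj j) b (csub (trunc f (aj j) z) x).

Lemma in_image_subspace j n : subspace (in_image j n).
Proof.
split=> [|k x y [xZ [zx [zxZ zxB]]] [yZ [zy [zyZ zyB]]]].
  split; first exact: (is_cycle_subspace _ _).1.
  exists czero; split; first exact: (is_cycle_subspace _ _).1.
  have -> : csub (trunc f (aj j) czero) czero = czero by chain_eq.
  exact: (is_bdry_subspace _ _).1.
split; first exact: (is_cycle_subspace _ _).2.
exists (cadd (cscale k zx) zy); split; first exact: (is_cycle_subspace _ _).2.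
have -> : csub (trunc f (aj j) (cadd (cscale k zx) zy)) (cadd (cscale k x) y) =
  cadd (cscale k (csub (trunc f (aj j) zx) x)) (csub (trunc f (aj j) zy) y) by chain_eq.
exact: (is_bdry_subspace _ _).2.
Qed.

Lemma in_image_step j n x : (j <= n)%N -> in_image j n.+1 x -> in_image j n x.
Proof.
move=> le_jn [xZ [z [zZ zB]]]; split=> //; exists (trunc f (aj n) z); split.
- exact: is_cycle_trunc (aj_dec n) zZ.
- by rewrite trunc_trunc //; exact: aj_anti.
Qed.

Lemma in_image_le j n n' x : (j <= n)%N -> (n <= n')%N -> in_image j n' x -> in_image j n x.
Proof.
move=> le_jn le_nn'; have le_jn' := leq_trans le_jn le_nn'.
rewrite -(subnKC le_jn) -(subnKC le_jn').
apply: (decreasing_le (P := fun d => in_image j (j + d))) => [d y|]; last exact: leq_sub2r.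
by rewrite addnS; apply: in_image_step; exact: leq_addr.
Qed.

Lemma in_image_stationary j :
  exists N, forall n, (N <= n)%N -> forall x, in_image j (j + N) x -> in_image j (j + n) x.
Proof.
have [s [_ window_s]] := window_seq (aj j) b.
apply: (subspace_chain_stationary (s := s)) => [n|n x|n x [[xCM _] _] c xc].
- exact: in_image_subspace.
- by rewrite addnS; apply: in_image_step; exact: leq_addr.
- by have [? ?] := xCM c xc; exact: window_s.
Qed.

Definition stab j := (j + epsilon (inhabits 0%N) (fun N =>
  forall n, (N <= n)%N -> forall x, in_image j (j + N) x -> in_image j (j + n) x))%N.

Definition in_stable j := in_image j (stab j).

Lemma stab_ge j : (j <= stab j)%N.
Proof. exact: leq_addr. Qed.

Lemma in_stable_image j n x : (stab j <= n)%N -> in_stable j x -> in_image j n x.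
Proof.
move=> le_n; have stabP := epsilon_spec (inhabits 0%N) _ (in_image_stationary j).
have le_jn := leq_trans (stab_ge j) le_n.
by rewrite -(subnKC le_jn); apply: stabP; rewrite leq_subRL.
Qed.

Lemma in_stable_of_image j n x : (stab j <= n)%N -> in_image j n x -> in_stable j x.
Proof. by move=> le_n; exact: in_image_le (stab_ge j) le_n. Qed.

Lemma in_stable_lift j z : in_stable j z ->
  exists z', in_stable j.+1 z' /\ is_bdry (aj j) b (csub (trunc f (aj j) z') z).
Proof.
move=> zS; pose n := maxn (stab j) (stab j.+1).
have [_ [z' [z'Z z'B]]] := in_stable_image (leq_maxl _ _ : (stab j <= n)%N) zS.
exists (trunc f (aj j.+1) z'); split; last by rewrite trunc_trunc.
apply: (in_stable_of_image (leq_maxr (stab j) _ : (stab j.+1 <= n)%N)); split.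
  exact: is_cycle_trunc (aj_anti (leq_trans (stab_ge _) (leq_maxr _ _))) z'Z.
exists z'; split=> //.
have -> : csub (trunc f (aj j.+1) z') (trunc f (aj j.+1) z') = czero by chain_eq.
exact: (is_bdry_subspace _ _).1.
Qed.

Fixpoint nstab j := if j is j'.+1 then maxn (nstab j') (stab j) else stab 0.

Lemma stab_le_nstab j : (stab j <= nstab j)%N.
Proof. by case: j => [|j] //=; exact: leq_maxr. Qed.

Lemma nstab_ge j : (j <= nstab j)%N.
Proof. exact: leq_trans (stab_ge j) (stab_le_nstab j). Qed.

Fixpoint psum n := if n is n'.+1 then cadd (psum n') (u n') else czero.

Lemma psum_tail_cycle j n : (j <= n)%N ->
  is_cycle (aj j) b (trunc f (aj j) (csub (psum n) (psum j))).
Proof.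
move=> le_jn; rewrite -(subnKC le_jn); elim: (n - j)%N => [|d IHd].
  have -> : trunc f (aj j) (csub (psum (j + 0)) (psum j)) = czero by rewrite addn0; chain_eq.
  exact: (is_cycle_subspace _ _).1.
rewrite addnS /=.
have -> : trunc f (aj j) (csub (cadd (psum (j + d)) (u (j + d))) (psum j)) =
  cadd (trunc f (aj j) (csub (psum (j + d)) (psum j))) (trunc f (aj j) (u (j + d))) by chain_eq.
apply: subspace_add (is_cycle_subspace _ _) IHd _.
exact: is_cycle_trunc (aj_anti (leq_addr _ _)) (u_cycle _).
Qed.

Definition tail j := trunc f (aj j) (csub (psum (nstab j)) (psum j)).
Definition err j := trunc f (aj j) (csub (psum (nstab j.+1)) (psum (nstab j))).

Lemma err_stable j : in_stable j (err j).
Proof.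
set z := trunc f (aj (nstab j)) (csub (psum (nstab j.+1)) (psum (nstab j))).
have zZ : is_cycle (aj (nstab j)) b z := psum_tail_cycle (leq_maxl _ _).
have errE : err j = trunc f (aj j) z by rewrite /z trunc_trunc //; exact: aj_anti (nstab_ge j).
apply: (in_stable_of_image (stab_le_nstab j)); split.
  by rewrite errE; exact: is_cycle_trunc (aj_anti (nstab_ge j)) zZ.
exists z; split=> //; rewrite -errE.
have -> : csub (err j) (err j) = czero by chain_eq.
exact: (is_bdry_subspace _ _).1.
Qed.

Lemma u_tail j : csub (u j) (csub (tail j) (trunc f (aj j) (tail j.+1))) = err j.
Proof.
have uge : supp_ge (aj j) (u j) := (proj1 (isCM_supp _ _ _) (u_cycle j).1).1.
by rewrite /tail trunc_trunc // -{1}(trunc_id uge) /err /=; chain_eq.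
Qed.

Fixpoint corr j := if j is j'.+1 then
  epsilon (inhabits czero) (fun z => in_stable j z /\
    is_bdry (aj j') b (csub (trunc f (aj j') z) (csub (corr j') (err j'))))
  else czero.

Lemma corr_stable j : in_stable j (corr j).
Proof.
elim: j => [|j IHj]; first exact: (in_image_subspace _ _).1.
have := in_stable_lift (subspace_sub (in_image_subspace _ _) IHj (err_stable j)).
by move=> /(epsilon_spec (inhabits czero)) [].
Qed.

Lemma corr_bdry j :
  is_bdry (aj j) b (csub (trunc f (aj j) (corr j.+1)) (csub (corr j) (err j))).
Proof.
have := in_stable_lift (subspace_sub (in_image_subspace _ _) (corr_stable j) (err_stable j)).
by move=> /(epsilon_spec (inhabits czero)) [].
Qed.

Lemma lim1_zero_bounded_cycles : lim1_zero u.
Proof.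
exists (fun _ => b), (fun j => cadd (tail j) (corr j)); split=> j.
- apply: subspace_add (is_cycle_subspace _ _) _ (corr_stable j).1.
  exact: psum_tail_cycle (nstab_ge j).
- exists b.
  have -> : csub (u j) (csub (cadd (tail j) (corr j)) (trunc f (aj j) (cadd (tail j.+1) (corr j.+1))))
    = csub (trunc f (aj j) (corr j.+1)) (csub (corr j) (err j)).
    rewrite -u_tail; chain_eq.
  exact: corr_bdry.
Qed.

End MittagLeffler.

(* [y j] is a primitive of [xs (aj j)] in CM_{aj j}, and [w j] a chain of bounded
   height witnessing that [xs (aj j.+1)] and [xs (aj j)] agree in HM_{aj j}. *)
Definition connecting_data (xs : R -> C -> F) (y w : nat -> C -> F) :=
  (forall j, exists b, isCM f (aj j) b (y j) /\ dtrunc (aj j) (y j) = xs (aj j)) /\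
  (exists b, forall j, isCM f (aj j) b (w j) /\
     dtrunc (aj j) (w j) = csub (trunc f (aj j) (xs (aj j.+1))) (xs (aj j))).

Definition connecting (y w : nat -> C -> F) j :=
  cadd (csub (y j) (trunc f (aj j) (y j.+1))) (w j).

(* The primitives differ by cycles, contributing an element of the image of Delta;
   the height of the [w j] is bounded, so Mittag-Leffler applies to their differences. *)
Lemma connecting_unique xs (y w y' w' : nat -> C -> F) :
  connecting_data xs y w -> connecting_data xs y' w' ->
  lim1_zero (fun j => csub (connecting y w j) (connecting y' w' j)).
Proof.
move=> [yP [b wP]] [y'P [b' w'P]].
have [by_ byP] := choice _ yP.
have [by'_ by'P] := choice _ y'P.
have dyZ j : is_cycle (aj j) (Rmax (by_ j) (by'_ j)) (csub (y j) (y' j)).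
  have [yCM dy] := byP j; have [y'CM dy'] := by'P j; split.
    apply: subspace_sub (isCM_subspace _ _) _ _.
    + exact: isCM_mono (Rle_refl _) (Rmax_l _ _) yCM.
    + exact: isCM_mono (Rle_refl _) (Rmax_r _ _) y'CM.
  by rewrite dtruncB ?dy ?dy'; [chain_eq|exact: isCM_bounded yCM|exact: isCM_bounded y'CM].
have dwZ j : is_cycle (aj j) (Rmax b b') (csub (w j) (w' j)).
  have [wCM dw] := wP j; have [w'CM dw'] := w'P j; split.
    apply: subspace_sub (isCM_subspace _ _) _ _.
    + exact: isCM_mono (Rle_refl _) (Rmax_l _ _) wCM.
    + exact: isCM_mono (Rle_refl _) (Rmax_r _ _) w'CM.
  by rewrite dtruncB ?dw ?dw'; [chain_eq|exact: isCM_bounded wCM|exact: isCM_bounded w'CM].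
have := lim1_zero_add (lim1_zero_Delta dyZ) (lim1_zero_bounded_cycles dwZ).
congr lim1_zero; apply: functional_extensionality => j; rewrite /connecting; chain_eq.
Qed.

Definition in_ker_kappa (p : R * (R -> C -> F)) := OZ f m p /\ UB f m (kappa p).

Definition prim (p : R * (R -> C -> F)) a : R * (C -> F) :=
  epsilon (inhabits (R0, czero))
    (fun q : R * (C -> F) => isCM f a q.1 q.2 /\ dtrunc a q.2 = p.2 a).

Definition glue (p : R * (R -> C -> F)) j : C -> F :=
  epsilon (inhabits czero) (fun w => isCM f (aj j) p.1 w /\
    dtrunc (aj j) w = csub (trunc f (aj j) (p.2 (aj j.+1))) (p.2 (aj j))).

Definition delta (p : R * (R -> C -> F)) j : R * (C -> F) :=
  (Rmax p.1 (Rmax (prim p (aj j)).1 (prim p (aj j.+1)).1),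
   connecting (fun i => (prim p (aj i)).2) (glue p) j).

Lemma prim_spec p a : in_ker_kappa p ->
  isCM f a (prim p a).1 (prim p a).2 /\ dtrunc a (prim p a).2 = p.2 a.
Proof.
move=> [_ pU]; apply: (epsilon_spec (inhabits (R0, czero))
  (fun q : R * (C -> F) => isCM f a q.1 q.2 /\ dtrunc a q.2 = p.2 a)).
by have [b [y [yCM dy]]] := (GB_bdry_lim _ _).1 (pU a); exists (b, y).
Qed.

Lemma glue_spec p j : in_ker_kappa p -> isCM f (aj j) p.1 (glue p j) /\
  dtrunc (aj j) (glue p j) = csub (trunc f (aj j) (p.2 (aj j.+1))) (p.2 (aj j)).
Proof.
move=> [[_ pC] _]; apply: (epsilon_spec (inhabits czero) (fun w => isCM f (aj j) p.1 w /\
  dtrunc (aj j) w = csub (trunc f (aj j) (p.2 (aj j.+1))) (p.2 (aj j)))).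
by have [w [wCM dw]] := (isB_bdry _ _ _).1 (pC _ _ (aj_dec j)); exists w.
Qed.

Lemma connecting_data_delta p : in_ker_kappa p ->
  connecting_data p.2 (fun j => (prim p (aj j)).2) (glue p).
Proof.
move=> kp; split=> [j|]; first by exists (prim p (aj j)).1; exact: prim_spec.
by exists p.1 => j; exact: glue_spec.
Qed.

Lemma delta_cycle p : in_ker_kappa p -> LZ f m aj (delta p).
Proof.
move=> kp j; apply/isZ_cycle; rewrite /delta /connecting /=.
have [y0CM dy0] := prim_spec (aj j) kp; have [y1CM dy1] := prim_spec (aj j.+1) kp.
have [wCM dw] := glue_spec j kp.
have y1tCM := isCM_trunc (a := aj j) (isCM_le y1CM).
set B := Rmax p.1 _.
have le_w : Rle p.1 B := Rmax_l _ _.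
have le_y0 : Rle (prim p (aj j)).1 B := Rle_trans _ _ _ (Rmax_l _ _) (Rmax_r _ _).
have le_y1 : Rle (prim p (aj j.+1)).1 B := Rle_trans _ _ _ (Rmax_r _ _) (Rmax_r _ _).
have by0 := isCM_bounded y0CM; have by1 := isCM_bounded y1tCM; have bw := isCM_bounded wCM.
split.
- apply: subspace_add (isCM_subspace _ _) _ (isCM_mono (Rle_refl _) le_w wCM).
  apply: subspace_sub (isCM_subspace _ _) _ _.
  + exact: isCM_mono (Rle_refl _) le_y0 y0CM.
  + exact: isCM_mono (Rle_refl _) le_y1 y1tCM.
- rewrite (dtruncD _ (bounded_sub by0 by1) bw) (dtruncB _ by0 by1) dtrunc_trunc.
  rewrite -[dtrunc (aj j) (prim p (aj j.+1)).2](trunc_dtrunc _ (aj_dec j)) dy0 dy1 dw.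
  chain_eq.
Qed.

Lemma delta_bdry p : in_ker_kappa p -> OB f m p -> lim1_zero (fun j => (delta p j).2).
Proof.
move=> kp [b [_ pB]].
have [v vP] := choice _ (fun a => (isB_bdry _ _ _).1 (pB a)).
pose w j := csub (trunc f (aj j) (v (aj j.+1))) (v (aj j)).
have vdata : connecting_data p.2 (fun j => v (aj j)) w.
  split=> [j|]; first by exists b; have [vCM ->] := vP (aj j).
  exists b => j; have [v0CM dv0] := vP (aj j); have [v1CM dv1] := vP (aj j.+1).
  have v1tCM := isCM_trunc (a := aj j) (isCM_le v1CM).
  split; first exact: subspace_sub (isCM_subspace _ _) v1tCM v0CM.
  rewrite /w (dtruncB _ (isCM_bounded v1tCM) (isCM_bounded v0CM)) dtrunc_trunc.
  by rewrite -(trunc_dtrunc _ (aj_dec j)) dv0 dv1.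
have := connecting_unique (connecting_data_delta kp) vdata.
by congr lim1_zero; apply: functional_extensionality => j; rewrite /delta /connecting /w; chain_eq.
Qed.

Lemma in_ker_kappa_lin k p q : in_ker_kappa p -> in_ker_kappa q ->
  in_ker_kappa (Oadd (Oscale k p) q).
Proof.
move=> [[pZ pC] pU] [[qZ qC] qU]; split; [split|] => [a|a1 a2 le_a|a].
- apply/isZ_cycle; apply: (is_cycle_subspace _ _).2.
  + exact: is_cycle_mono (Rmax_l _ _) ((isZ_cycle _ _ _).1 (pZ a)).
  + exact: is_cycle_mono (Rmax_r _ _) ((isZ_cycle _ _ _).1 (qZ a)).
- apply/isB_bdry => /=.
  have -> : csub (trunc f a2 (cadd (cscale k (p.2 a1)) (q.2 a1)))
      (cadd (cscale k (p.2 a2)) (q.2 a2))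
    = cadd (cscale k (csub (trunc f a2 (p.2 a1)) (p.2 a2)))
        (csub (trunc f a2 (q.2 a1)) (q.2 a2)) by chain_eq.
  apply: (is_bdry_subspace _ _).2.
  + exact: is_bdry_mono (Rmax_l _ _) ((isB_bdry _ _ _).1 (pC _ _ le_a)).
  + exact: is_bdry_mono (Rmax_r _ _) ((isB_bdry _ _ _).1 (qC _ _ le_a)).
- apply/GB_bdry_lim; apply: (is_bdry_lim_subspace _).2.
  + exact: (GB_bdry_lim _ _).1 (pU a).
  + exact: (GB_bdry_lim _ _).1 (qU a).
Qed.

Lemma delta_lin k p q : in_ker_kappa p -> in_ker_kappa q ->
  lim1_zero (fun j => csub (delta (Oadd (Oscale k p) q) j).2
                           (cadd (cscale k (delta p j).2) (delta q j).2)).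
Proof.
move=> kp kq; have kpq := in_ker_kappa_lin k kp kq.
pose y j := cadd (cscale k (prim p (aj j)).2) (prim q (aj j)).2.
pose w j := cadd (cscale k (glue p j)) (glue q j).
have data : connecting_data (Oadd (Oscale k p) q).2 y w.
  split=> [j|].
  - have [ypCM dyp] := prim_spec (aj j) kp; have [yqCM dyq] := prim_spec (aj j) kq.
    exists (Rmax (prim p (aj j)).1 (prim q (aj j)).1); split.
      apply: (isCM_subspace _ _).2.
      + exact: isCM_mono (Rle_refl _) (Rmax_l _ _) ypCM.
      + exact: isCM_mono (Rle_refl _) (Rmax_r _ _) yqCM.
    by rewrite /y dtrunc_lin ?dyp ?dyq //; [exact: isCM_bounded ypCM|exact: isCM_bounded yqCM].
  - exists (Rmax p.1 q.1) => j.
    have [wpCM dwp] := glue_spec j kp; have [wqCM dwq] := glue_spec j kq; split.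
      apply: (isCM_subspace _ _).2.
      + exact: isCM_mono (Rle_refl _) (Rmax_l _ _) wpCM.
      + exact: isCM_mono (Rle_refl _) (Rmax_r _ _) wqCM.
    rewrite /w dtrunc_lin ?dwp ?dwq /=; first by chain_eq.
    + exact: isCM_bounded wpCM.
    + exact: isCM_bounded wqCM.
have := connecting_unique (connecting_data_delta kpq) data.
by congr lim1_zero; apply: functional_extensionality => j; rewrite /delta /connecting /y /w; chain_eq.
Qed.

Section UniformPrimitive.
Variables (yt eta w : nat -> C -> F) (B0 : R).
Hypothesis yt_bounded : forall j, bounded (yt j).
Hypothesis eta_bounded : forall j, bounded (eta j).
Hypothesis w_le : forall j, supp_le B0 (w j).
Hypothesis yt_step : forall j,
  trunc f (aj j) (yt j.+1) = cadd (csub (yt j) (dtrunc (aj j) (eta j))) (w j).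

(* The parts of [yt j.+1] and [d (eta j)] below [aj j] lie under [aj 0], so
   adding them and [w j] to a primitive of [d (yt j)] keeps the height bounded. *)
Lemma uniform_primitive :
  exists B, Rle B0 B /\ forall j, exists V, supp_le B V /\ dfull V = dfull (yt j).
Proof.
have [b0 b0P] := yt_bounded 0.
exists (Rmax B0 (Rmax (aj 0) b0)); split; first exact: Rmax_l.
set B := Rmax _ _.
have le_w : Rle B0 B := Rmax_l _ _.
have le_aj j : Rle (aj j) B.
  exact: Rle_trans (aj_anti (leq0n j)) (Rle_trans _ _ _ (Rmax_l _ _) (Rmax_r _ _)).
elim=> [|j [V [VB dV]]].
  exists (yt 0); split=> //; apply: supp_le_mono b0P.
  exact: Rle_trans (Rmax_r _ _) (Rmax_r _ _).
have bV : bounded V by exists B.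
have bw : bounded (w j) by exists B0.
have byt := yt_bounded; have beta := eta_bounded.
pose L := csub (yt j.+1) (trunc f (aj j) (yt j.+1)).
pose N := csub (dfull (eta j)) (dtrunc (aj j) (eta j)).
exists (cadd V (cadd (w j) (cadd L N))); split.
  apply: supported_add => //; apply: supported_add; first exact: supp_le_mono le_w (@w_le j).
  rewrite /L /N /dtrunc; apply: supported_add;
    by apply: (supp_le_mono (le_aj j)); exact: supp_le_sub_trunc.
have bL : bounded L by rewrite /L; bounded_chain.
have bN : bounded N by rewrite /N; bounded_chain.
rewrite (dfullD bV (bounded_add bw (bounded_add bL bN))) (dfullD bw (bounded_add bL bN)).
rewrite (dfullD bL bN) /L /N !dfullB ?dfullK; try by bounded_chain.
rewrite yt_step dfullD ?dfullB ?dV; try by bounded_chain.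
chain_eq.
Qed.

End UniformPrimitive.

(* Corrected by the witnesses of [delta p = 0], the primitives [prim p] have the same
   boundaries as chains of a common height. *)
Lemma delta_injective p : in_ker_kappa p -> lim1_zero (fun j => (delta p j).2) -> OB f m p.
Proof.
move=> kp [b [xi [xiZ xiB]]].
have etaP j : exists e, bounded e /\
    csub (delta p j).2 (csub (xi j) (trunc f (aj j) (xi j.+1))) = dtrunc (aj j) e.
  by have [b' [e [eCM ->]]] := xiB j; exists e; split=> //; exact: isCM_bounded eCM.
have [eta etaP'] := choice _ etaP.
pose yt j := csub (prim p (aj j)).2 (xi j).
have byt j : bounded (yt j).
  by apply: bounded_sub; [exact: isCM_bounded (prim_spec _ kp).1|exact: isCM_bounded (xiZ j).1].
have dyt j : dtrunc (aj j) (yt j) = p.2 (aj j).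
  have [yCM dy] := prim_spec (aj j) kp; have [xiCM dxi] := xiZ j.
  by rewrite dtruncB ?dy ?dxi; [chain_eq|exact: isCM_bounded yCM|exact: isCM_bounded xiCM].
have yt_step j : trunc f (aj j) (yt j.+1) =
    cadd (csub (yt j) (dtrunc (aj j) (eta j))) (glue p j).
  by rewrite -(etaP' j).2 /delta /connecting /yt; chain_eq.
have glue_le j : supp_le p.1 (glue p j) := isCM_le (glue_spec j kp).1.
have [B [le_B VP]] := uniform_primitive byt (fun j => (etaP' j).1) glue_le yt_step.
exists B; split=> // a; apply/isB_bdry.
have [N NP] := aj_unbounded a; have [V [VB dV]] := VP N.
apply: (is_bdry_of_primitive kp.1 (NP N (leqnn N)) le_B VB).
by rewrite /dtrunc dV; exact: dyt.
Qed.

(* The boundaries of the telescoping sums [zsum n] stabilise above [aj n], since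
   [d (z n)] vanishes there. *)
Section Surjectivity.
Variables (z : nat -> C -> F) (bz : nat -> R).
Hypothesis z_cycle : forall j, is_cycle (aj j) (bz j) (z j).

Fixpoint zsum n := if n is n'.+1 then csub (zsum n') (z n') else czero.
Fixpoint zheight n := if n is n'.+1 then Rmax (zheight n') (bz n') else aj 0.

Lemma zsum_le n : supp_le (zheight n) (zsum n).
Proof.
elim: n => [|n IH] /=; first exact: supported0.
apply: supported_sub; first exact: supp_le_mono (Rmax_l _ _) IH.
exact: supp_le_mono (Rmax_r _ _) (isCM_le (z_cycle n).1).
Qed.

Lemma zsum_bounded n : bounded (zsum n).
Proof. by exists (zheight n); exact: zsum_le. Qed.

Lemma zsum_ge n i : (n <= i)%N -> supp_ge (aj i) (zsum n).
Proof.
elim: n => [|n IH] le_ni /=; first exact: supported0.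
have le_ni' := ltnW le_ni; apply: supported_sub (IH le_ni') _.
exact: supp_ge_mono (aj_anti le_ni') (proj1 (isCM_supp _ _ _) (z_cycle n).1).1.
Qed.

Lemma zsum_ge_succ j : supp_ge (aj j) (zsum j.+1).
Proof.
apply: supported_sub (zsum_ge (leqnn j)) _.
exact: (proj1 (isCM_supp _ _ _) (z_cycle j).1).1.
Qed.

Lemma dfull_zsum_stable n i c : (n <= i)%N -> Rle (aj n) (f c) ->
  dfull (zsum i) c = dfull (zsum n) c.
Proof.
move=> le_ni le_c; rewrite -(subnKC le_ni); elim: (i - n)%N => [|d IHd]; first by rewrite addn0.
rewrite addnS /= (dfullB (zsum_bounded _) (isCM_bounded (z_cycle _).1)).
rewrite /csub /cadd /cscale IHd.
have := equal_f (z_cycle (n + d)).2 c; rewrite /dtrunc /trunc /czero.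
case_Rle_dec => [->|]; first by rewrite mulr0 addr0.
by have := aj_anti (leq_addr d n); lra.
Qed.

Definition jdeep a := epsilon (inhabits 0%N) (fun j => Rle (aj j) a).

Lemma jdeep_spec a : Rle (aj (jdeep a)) a.
Proof.
apply: (epsilon_spec (inhabits 0%N) (fun j => Rle (aj j) a)).
by have [N NP] := aj_unbounded a; exists N; exact: NP.
Qed.

Definition zbdry a := dtrunc a (zsum (jdeep a)).

Lemma zbdryE a n : Rle (aj n) a -> zbdry a = dtrunc a (zsum n).
Proof.
move=> le_n; apply: functional_extensionality => c; rewrite /zbdry /dtrunc /trunc.
case: Rle_dec => [le_c|//].
have le1 : Rle (aj (jdeep a)) (f c) := Rle_trans _ _ _ (jdeep_spec a) le_c.
have le2 : Rle (aj n) (f c) := Rle_trans _ _ _ le_n le_c.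
by rewrite -(dfull_zsum_stable (leq_maxl _ n) le1) (dfull_zsum_stable (leq_maxr _ n) le2).
Qed.

Definition zpreimage : R * (R -> C -> F) := (aj 0, zbdry).

Lemma zpreimage_ker : in_ker_kappa zpreimage.
Proof.
split; [split|] => [a|a1 a2 le_a|a]; rewrite /=.
- apply/isZ_cycle; split; last by rewrite /zbdry (dtruncK _ (zsum_bounded _)).
  apply/isCM_supp; split; first exact: supp_ge_trunc.
  move=> c dc; case: (Rle_dec (f c) (aj 0)) => // lt_c; exfalso; apply: dc.
  rewrite /zbdry /dtrunc /trunc; case_Rle_dec => //.
  by rewrite (dfull_zsum_stable (leq0n _)) /= ?dfull0 //; lra.
- apply/isB_bdry; rewrite {1}/zbdry trunc_dtrunc // -zbdryE; last first.
    exact: Rle_trans (jdeep_spec a1) le_a.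
  have -> : csub (zbdry a2) (zbdry a2) = czero by chain_eq.
  exact: (is_bdry_subspace _ _).1.
- apply/GB_bdry_lim; exists (zheight (jdeep a)).
  rewrite /= /zbdry -dtrunc_trunc; apply: is_bdry_dtrunc.
  by apply: isCM_trunc; exact: zsum_le.
Qed.

Lemma connecting_data_zsum : connecting_data zbdry zsum (fun _ => czero).
Proof.
split=> [j|]; first by exists (zheight j); rewrite (zbdryE (Rle_refl _)); split=> //;
  apply/isCM_supp; split; [exact: zsum_ge|exact: zsum_le].
exists R0 => j; split; first exact: supported0.
rewrite dtrunc0 (zbdryE (Rle_refl (aj j.+1))) trunc_dtrunc // (zbdryE (aj_dec j)).
chain_eq.
Qed.

Lemma delta_surjective :
  in_ker_kappa zpreimage /\ lim1_zero (fun j => csub (delta zpreimage j).2 (z j)).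
Proof.
split; first exact: zpreimage_ker.
have := connecting_unique (connecting_data_delta zpreimage_ker) connecting_data_zsum.
congr lim1_zero; apply: functional_extensionality => j.
by rewrite /connecting (trunc_id (@zsum_ge_succ j)) /delta /connecting /=; chain_eq.
Qed.

End Surjectivity.

End Sequence.

End FloerComplex.

Theorem mainTheorem11 (F : fieldType) (C : Type) (f : C -> R) (m : C -> C -> F)
  (Htriple : floer_triple f m)
  (aj : nat -> R)
  (Haj_dec : forall j, Rle (aj j.+1) (aj j))
  (Haj_lim : forall M : R, exists N : nat, forall j : nat, (N <= j)%N -> Rle (aj j) M) :
  sq_iso (sq_ker (HMbar f m) (HMund f m) (@kappa F C)) (lim1G f m aj).
Proof.
exists (delta f m aj); split; [split; [|split]|split].
- by move=> p kp; exact: delta_cycle.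
- by move=> p kp pB; apply/(LB_lim1_zero Htriple); exact: delta_bdry.
- by move=> k p q kp kq; apply/(LB_lim1_zero Htriple); exact: delta_lin.
- by move=> p kp /(LB_lim1_zero Htriple); exact: delta_injective.
- move=> y yZ; have z_cycle j : is_cycle f m (aj j) (y j).1 (y j).2.
    by apply/(isZ_cycle Htriple); exact: (yZ j).
  have [kp pB] := delta_surjective Htriple Haj_dec Haj_lim z_cycle.
  by eexists; split; [exact: kp|apply/(LB_lim1_zero Htriple); exact: pB].
Qed.
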